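(* In the setting below, for all $r>0$ and all $m\in\mathbb{N}$: $$\mathbb{E}\big[\mathbb{I}_{B_r}(X^x_m)|\eta(X^x_m)-\eta(x)|\big]\le m\,\mathbb{E}\big[\mathbb{I}_{B_r}(X)|\eta(X)-\eta(x)|\big],$$ $$\mathbb{E}\big[\mathbb{I}_{S_r}(X^x_m)|\eta(X^x_m)-\eta(x)|\big]\le 2\|\eta\|_\infty\, m\,\mathbb{P}_X(S_r)\exp\big(-(m-1)\mathbb{P}_X(B_r)\big),$$ $$\mathbb{E}\big[\mathbb{I}_{\mathcal{X}\setminus\bar B_r}(X^x_m)|\eta(X^x_m)-\eta(x)|\big]\le 2\|\eta\|_\infty\exp\big(-m\,\mathbb{P}_X(\bar B_r)\big).$$
   Context: Let $(\mathcal{X},d)$ be a metric space with its Borel $\sigma$-algebra, let $(\Omega,\mathcal{F},\mathbb{P})$ be a probability space, and let $X,X_1,X_2,\dots$ be i.i.d. $\mathcal{X}$-valued random variables with common law $\mathbb{P}_X$. For $x\in\mathcal{X}$ and $r>0$ write $B_r=\{x':d(x,x')<r\}$, $\bar B_r=\{x':d(x,x')\le r\}$ and $S_r=\{x':d(x,x')=r\}$. The support of $\mathbb{P}_X$ is the set of $x$ such that $\mathbb{P}_X(\bar B_r(x))>0$ for all $r>0$. Fix $x$ in the support of $\mathbb{P}_X$ and a bounded measurable $\eta:\mathcal{X}\to\mathbb{R}$, with $\|\eta\|_\infty$ its supremum norm. For each $m\in\mathbb{N}$, a nearest neighbor of $x$ among $X_1,\dots,X_m$ is a measurable $X^x_m:\Omega\to\mathcal{X}$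 with $X^x_m(\omega)\in\arg\min_{x'\in\{X_1(\omega),\dots,X_m(\omega)\}}d(x,x')$ for every $\omega\in\Omega$; fix such a sequence $(X^x_m)_{m\in\mathbb{N}}$. *)

From HB Require Import structures.
From mathcomp Require Import all_boot all_order all_algebra.
From mathcomp Require Import all_classical all_reals all_analysis.
Set Implicit Arguments. Unset Strict Implicit. Unset Printing Implicit Defensive.
Import Order.TTheory GRing.Theory Num.Theory.
Local Open Scope classical_set_scope.
Local Open Scope ring_scope.

Section Defs.
Context {R : realType} {T : Type}.
Variable dist : T -> T -> R.

Definition is_metric : Prop :=
  (forall x y, dist x y = 0 <-> x = y) /\
  (forall x y, dist x y = dist y x) /\
  (forall x y z, dist x z <= dist x y + dist y z).

Definition metric_open (A : set T) : Prop :=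
  forall y, A y -> exists2 e : R, 0 < e & [set z | dist y z < e] `<=` A.

Definition oball (x : T) (r : R) : set T := [set y | dist x y < r].
Definition cball (x : T) (r : R) : set T := [set y | dist x y <= r].
Definition sphere (x : T) (r : R) : set T := [set y | dist x y = r].
End Defs.

Definition supnorm {R : realType} {T : Type} (f : T -> R) : R :=
  sup (range (fun y => `|f y|)).

Definition mutually_independent {R : realType} {dO dT : measure_display}
  {O : measurableType dO} {T : measurableType dT}
  (P : probability O R) (Y : nat -> O -> T) : Prop :=
  forall (s : seq nat), uniq s ->
  forall A : nat -> set T, (forall i, measurable (A i)) ->
    P (\bigcap_(i in [set` s]) (Y i @^-1` A i)) =
    (\prod_(i <- s) P (Y i @^-1` A i))%E.

Definition identically_distributed {R : realType} {dO dT : measure_display}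
  {O : measurableType dO} {T : measurableType dT}
  (P : probability O R) (Y : nat -> O -> T) : Prop :=
  forall i (A : set T), measurable A -> P (Y i @^-1` A) = P (Y 0%N @^-1` A).

From HB Require Import structures.
From mathcomp Require Import all_boot all_order all_algebra.
From mathcomp Require Import all_classical all_reals all_analysis.
From mathcomp Require Import lra measurable_realfun.
Set Implicit Arguments. Unset Strict Implicit. Unset Printing Implicit Defensive.
Import Order.TTheory GRing.Theory Num.Theory.
Local Open Scope classical_set_scope.
Local Open Scope ring_scope.

(* Write  f_A(y) = 1_A(y) |eta y - eta x|  and  X = Y 0,
   X_i = Y i.  The three bounds are of two kinds.
   - Inside the open ball the nearest neighbor is one of X_1..X_m, so
     f_B(X^x_m) <= sum_i f_B(X_i) pointwise; integrating and using that the
     X_i all have the law of X gives the factor m (no independence needed).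
   - On the sphere and outside the closed ball we only use the bound
     f_A <= 2 ||eta||, and control the probability of the event on which the
     nearest neighbor lies in A: if it lies outside the closed ball then so do
     all X_i, an event of probability (1 - P(X in cball))^m; if it is X_i and
     lies on the sphere, then X_i is on the sphere and every X_j is outside
     the open ball, an event of probability P(X in S)(1 - P(X in B))^(m-1).
     Independence turns these probabilities into products, and
     (1 - p)^n <= exp(-n p) finishes. *)

Section MetricSets.
Context (R : realType) (dT : measure_display) (T : measurableType dT).
Variable dist : T -> T -> R.
Hypothesis dist_metric : is_metric dist.
Hypothesis measurable_borel : @measurable _ T = <<s metric_open dist >>.

Lemma oball_open (x : T) (r : R) : metric_open dist (oball dist x r).
Proof.
have [_ [_ tri]] := dist_metric.
move=> y /= xy_r; exists (r - dist x y); first by rewrite subr_gt0.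
by move=> z /= yz; have := tri x y z; rewrite /oball /=; lra.
Qed.

Lemma cball_complement_open (x : T) (r : R) :
  metric_open dist (~` cball dist x r).
Proof.
have [_ [sym tri]] := dist_metric.
move=> y /= /negP; rewrite -ltNge => r_xy.
exists (dist x y - r); first by rewrite subr_gt0.
move=> z /= yz; have := tri x z y; rewrite (sym z y) /cball /= => tri_xzy.
by apply/negP; rewrite -ltNge; lra.
Qed.

Lemma measurable_oball (x : T) (r : R) : measurable (oball dist x r).
Proof. by rewrite measurable_borel; apply: sub_sigma_algebra; exact: oball_open. Qed.

Lemma measurable_cball (x : T) (r : R) : measurable (cball dist x r).
Proof.
rewrite -(setCK (cball _ _ _)); apply: measurableC.
by rewrite measurable_borel; apply: sub_sigma_algebra; exact: cball_complement_open.
Qed.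

Lemma measurable_sphere (x : T) (r : R) : measurable (sphere dist x r).
Proof.
have -> : sphere dist x r = cball dist x r `&` ~` oball dist x r.
  apply/seteqP; split => y; rewrite /sphere /cball /oball /=.
    by move=> ->; rewrite ltxx.
  by move=> [le_r /negP]; rewrite -leNgt => ge_r; apply/eqP; rewrite eq_le le_r.
by apply: measurableI; [exact: measurable_cball | apply/measurableC/measurable_oball].
Qed.

End MetricSets.

Lemma prod_one_distinguished (R : comPzSemiRingType) (s : seq nat) (i : nat) (a b : R) :
  uniq s -> i \in s ->
  \prod_(j <- s) (if j == i then a else b) = a * b ^+ (size s).-1.
Proof.
move=> s_uniq i_s; rewrite (bigD1_seq i) //= eqxx; congr (_ * _).
rewrite (eq_bigr (fun=> b)); last by move=> j /negbTE ->.
rewrite big_const_seq iter_mulr_1; congr (_ ^+ _).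
have := count_predC (pred1 i) s; rewrite (count_uniq_mem _ s_uniq) i_s.
by move=> <-.
Qed.

Section IIDFamily.
Context (R : realType) (dO dT : measure_display).
Context (O : measurableType dO) (T : measurableType dT).
Variables (P : probability O R) (Y : nat -> O -> T).
Hypothesis measurable_Y : forall i, measurable_fun setT (Y i).

Lemma measurable_preimage i (A : set T) : measurable A -> measurable (Y i @^-1` A).
Proof. by move=> mA; rewrite -[X in measurable X]setTI; exact: measurable_Y. Qed.

(* Probabilities are finite, so they may be handled as reals through fine. *)
Lemma preimage_prob_fine i (A : set T) : measurable A ->
  P (Y i @^-1` A) = (fine (P (Y i @^-1` A)))%:E.
Proof. by move=> mA; rewrite fineK // fin_num_measure //; exact: measurable_preimage. Qed.

Lemma preimage_prob_01 i (A : set T) : measurable A ->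
  0 <= fine (P (Y i @^-1` A)) <= 1.
Proof.
move=> mA; rewrite fine_ge0 //=.
by have := probability_le1 P (measurable_preimage i mA); rewrite preimage_prob_fine.
Qed.

Lemma preimage_prob_setC i (A : set T) : measurable A ->
  fine (P (Y i @^-1` ~` A)) = 1 - fine (P (Y i @^-1` A)).
Proof.
move=> mA; rewrite preimage_setC probability_setC; last exact: measurable_preimage.
by rewrite (preimage_prob_fine i mA).
Qed.

Hypothesis Y_ident : identically_distributed P Y.

Lemma integral_ident_distr (g : T -> R) i : measurable_fun setT g ->
  (forall y, 0 <= g y) ->
  (\int[P]_w (g (Y i w))%:E = \int[P]_w (g (Y 0%N w))%:E)%E.
Proof.
move=> mg g_ge0.
have to_law j : (\int[P]_w (g (Y j w))%:E = \int[pushforward P (Y j)]_y (g y)%:E)%E.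
  rewrite (ge0_integral_pushforward (measurable_Y j)) ?preimage_setT //.
    exact/measurable_EFinP.
  by move=> y _; rewrite lee_fin.
by rewrite !to_law; apply: eq_measure_integral => A mA _ /=; exact: Y_ident.
Qed.

(* A random variable that always equals one of Y 1, ..., Y m: its nonnegative
   functionals have expectation at most m times that of Y 0, since
   g (N w) <= sum_i g (Y i w) pointwise. *)
Lemma integral_selection_le (g : T -> R) (N : O -> T) (m : nat) :
  measurable_fun setT g -> (forall y, 0 <= g y) -> measurable_fun setT N ->
  (forall w, exists2 i : nat, (1 <= i <= m)%N & N w = Y i w) ->
  (\int[P]_w (g (N w))%:E <= m%:R%:E * \int[P]_w (g (Y 0%N w))%:E)%E.
Proof.
move=> mg g_ge0 mN N_sel.
have mgY i : measurable_fun setT (fun w => (g (Y i w))%:E).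
  by apply/measurable_EFinP; exact: measurableT_comp mg (measurable_Y i).
apply: (@le_trans _ _ (\int[P]_w (\sum_(i <- iota 1 m) (g (Y i w))%:E))%E).
  apply: ge0_le_integral => //.
  - by move=> w _; rewrite lee_fin.
  - by apply/measurable_EFinP; exact: measurableT_comp mg mN.
  - exact: emeasurable_sum.
  move=> w _; have [i i_range ->] := N_sel w.
  rewrite sumEFin lee_fin (bigD1_seq i) ?iota_uniq ?mem_iota ?add1n ?ltnS //=.
  by rewrite lerDl sumr_ge0.
rewrite ge0_integral_sum //; last by move=> i w _; rewrite lee_fin.
rewrite (eq_bigr _ (fun i _ => integral_ident_distr i mg g_ge0)).
by rewrite big_const_seq count_predT size_iota iter_addr_0 mule_natl.
Qed.

Hypothesis Y_indep : mutually_independent P Y.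

Lemma prob_bigcap_preimage (A : nat -> set T) (s : seq nat) :
  (forall i, measurable (A i)) -> uniq s ->
  P (\bigcap_(i in [set` s]) (Y i @^-1` A i)) =
  (\prod_(i <- s) fine (P (Y 0%N @^-1` A i)))%:E.
Proof.
move=> mA s_uniq; rewrite Y_indep // -prodEFin; apply: eq_bigr => i _.
by rewrite Y_ident // -preimage_prob_fine.
Qed.

Lemma prob_all_in (C : set T) (s : seq nat) : measurable C -> uniq s ->
  fine (P (\bigcap_(j in [set` s]) (Y j @^-1` C))) = fine (P (Y 0%N @^-1` C)) ^+ size s.
Proof.
move=> mC s_uniq; rewrite (prob_bigcap_preimage (fun=> mC)) //=.
by rewrite big_const_seq count_predT iter_mulr_1.
Qed.

Lemma prob_one_in_rest_in (S C : set T) (s : seq nat) (i : nat) :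
  measurable S -> measurable C -> uniq s -> i \in s ->
  fine (P (\bigcap_(j in [set` s]) (Y j @^-1` (if j == i then S else C)))) =
  fine (P (Y 0%N @^-1` S)) * fine (P (Y 0%N @^-1` C)) ^+ (size s).-1.
Proof.
move=> mS mC s_uniq i_s.
have mA j : measurable (if j == i then S else C) by case: (j == i).
rewrite (prob_bigcap_preimage mA) //= -(prod_one_distinguished _ _ s_uniq i_s).
by apply: eq_bigr => j _; case: (j == i).
Qed.

End IIDFamily.

(* (1 - p)^n <= exp(-n p), from 1 - p <= exp(-p). *)
Lemma pow_le_expR (R : realType) (p : R) (n : nat) : 0 <= p <= 1 ->
  (1 - p) ^+ n <= expR (- (n%:R * p)).
Proof.
move=> /andP[p_ge0 p_le1]; rewrite -mulrN expRM_natl; apply: lerXn2r.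
- by rewrite nnegrE subr_ge0.
- by rewrite nnegrE expR_ge0.
- by have := expR_ge1Dx (- p); lra.
Qed.

Lemma supnorm_ge {R : realType} {T : Type} {eta : T -> R} :
  (exists M : R, forall y, `|eta y| <= M) -> forall y, `|eta y| <= supnorm eta.
Proof.
move=> [M etaM] y; apply: ub_le_sup; last by exists y.
by exists M => _ [z _ <-]; exact: etaM.
Qed.

Lemma supnorm_ge0 {R : realType} {T : Type} {eta : T -> R} (x : T) :
  (exists M : R, forall y, `|eta y| <= M) -> 0 <= supnorm eta.
Proof. by move=> eta_bdd; apply: le_trans (supnorm_ge eta_bdd x). Qed.

Lemma supnorm_diff {R : realType} {T : Type} {eta : T -> R} :
  (exists M : R, forall y, `|eta y| <= M) ->
  forall a b, `|eta a - eta b| <= 2 * supnorm eta.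
Proof.
move=> eta_bdd a b; have := ler_normB (eta a) (eta b).
by have := supnorm_ge eta_bdd a; have := supnorm_ge eta_bdd b; lra.
Qed.

Lemma integral_le_sum_indic (R : realType) (d : measure_display)
    (O : measurableType d) (P : probability O R) (I : Type) (s : seq I)
    (E : I -> set O) (f : O -> R) (c : R) :
  measurable_fun setT f -> (forall w, 0 <= f w) -> (forall i, measurable (E i)) ->
  0 <= c -> (forall w, f w <= c * \sum_(i <- s) \1_(E i) w) ->
  (\int[P]_w (f w)%:E <= (c * \sum_(i <- s) fine (P (E i)))%:E)%E.
Proof.
move=> mf f_ge0 mE c_ge0 f_le.
have mind i : measurable_fun setT (fun w => (\1_(E i) w)%:E).
  by apply/measurable_EFinP; exact: measurable_indic.
apply: (@le_trans _ _ (\int[P]_w (c%:E * \sum_(i <- s) (\1_(E i) w)%:E))%E).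
  apply: ge0_le_integral => //.
  - by move=> w _; rewrite lee_fin.
  - exact/measurable_EFinP.
  - by apply: measurable_funeM; exact: emeasurable_sum.
  - by move=> w _; rewrite sumEFin -EFinM lee_fin.
rewrite ge0_integralZl //; last 2 first.
- exact: emeasurable_sum.
- by move=> w _; apply: sume_ge0 => i _; rewrite lee_fin.
have integral_E i : (\int[P]_w (\1_(E i) w)%:E = (fine (P (E i)))%:E)%E.
  by rewrite integral_indic // setIT fineK // fin_num_measure.
by rewrite ge0_integral_sum // EFinM -sumEFin (eq_bigr _ (fun i _ => integral_E i)).
Qed.

Section NearestPoint.
Context (R : realType) (T : Type) (dist : T -> T -> R).
Variables (x z : T) (y : nat -> T) (m : nat) (r : R).
Hypothesis z_nearest : forall i, (1 <= i <= m)%N -> dist x z <= dist x (y i).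

Lemma nearest_outside_cball : ~ cball dist x r z ->
  forall i, (1 <= i <= m)%N -> ~ cball dist x r (y i).
Proof.
move=> z_out i i_range; rewrite /cball /= => yi_in.
by apply: z_out; apply: le_trans (z_nearest i_range) yi_in.
Qed.

Lemma nearest_on_sphere : sphere dist x r z ->
  forall i, (1 <= i <= m)%N -> ~ oball dist x r (y i).
Proof.
rewrite /sphere /oball /= => z_r i i_range.
by apply/negP; rewrite -leNgt -z_r; exact: z_nearest.
Qed.

End NearestPoint.

Definition local_error {R : realType} {T : Type} (eta : T -> R) (x : T)
  (A : set T) (y : T) : R := \1_A y * `|eta y - eta x|.

Section LocalErrorBounds.
Context (R : realType) (dT : measure_display) (T : measurableType dT).
Variables (eta : T -> R) (x : T).

Lemma local_error_ge0 (A : set T) y : 0 <= local_error eta x A y.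
Proof. by rewrite /local_error mulr_ge0 // indicE; case: (_ \in _). Qed.

Lemma measurable_local_error (A : set T) : measurable A ->
  measurable_fun setT eta -> measurable_fun setT (local_error eta x A).
Proof.
move=> mA meta; apply: measurable_funM; first exact: measurable_indic.
apply: (measurableT_comp (@normr_measurable _ _)).
by apply: measurable_funB => //; exact: measurable_cst.
Qed.

Lemma local_error_le_indic (O : Type) (A : set T) (E : set O) y w :
  (exists M : R, forall y, `|eta y| <= M) -> (A y -> E w) ->
  local_error eta x A y <= 2 * supnorm eta * \1_E w.
Proof.
move=> eta_bdd AE; rewrite /local_error indicE.
have [Ay|nAy] := boolP (y \in A); last first.
  by rewrite mul0r mulr_ge0 ?mulr_ge0 ?(supnorm_ge0 x) // indicE; case: (_ \in _).
by rewrite indicE mem_set ?mul1r ?mulr1; [exact: supnorm_diff | apply: AE; rewrite -inE].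
Qed.

End LocalErrorBounds.

Section NearestNeighborRisk.
Context (R : realType) (dT dO : measure_display).
Context (T : measurableType dT) (O : measurableType dO).
Variables (dist : T -> T -> R) (P : probability O R) (Y : nat -> O -> T).
Variables (x : T) (eta : T -> R) (m : nat) (N : O -> T) (r : R).
Hypothesis dist_metric : is_metric dist.
Hypothesis measurable_borel : @measurable _ T = <<s metric_open dist >>.
Hypothesis measurable_Y : forall i, measurable_fun setT (Y i).
Hypothesis Y_indep : mutually_independent P Y.
Hypothesis Y_ident : identically_distributed P Y.
Hypothesis measurable_eta : measurable_fun setT eta.
Hypothesis eta_bdd : exists M : R, forall y, `|eta y| <= M.
Hypothesis measurable_N : measurable_fun setT N.
Hypothesis N_select : forall w, exists2 i : nat, (1 <= i <= m)%N & N w = Y i w.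
Hypothesis N_nearest :
  forall w i, (1 <= i <= m)%N -> dist x (N w) <= dist x (Y i w).

Lemma risk_oball :
  (\int[P]_w (local_error eta x (oball dist x r) (N w))%:E
    <= m%:R%:E * \int[P]_w (local_error eta x (oball dist x r) (Y 0%N w))%:E)%E.
Proof.
apply: integral_selection_le => //; last exact: local_error_ge0.
by apply: measurable_local_error => //; exact: measurable_oball.
Qed.

(* Third bound: outside the closed ball the nearest neighbor forces all of
   X_1, ..., X_m outside it. *)
Lemma risk_outside_cball :
  (\int[P]_w (local_error eta x (~` cball dist x r) (N w))%:E
    <= (2 * supnorm eta
        * expR (- (m%:R * fine (P (Y 0%N @^-1` cball dist x r)))))%:E)%E.
Proof.
have mB := measurable_cball dist_metric measurable_borel x r.
have mC : measurable (~` cball dist x r) by exact: measurableC.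
pose E := \bigcap_(i in [set` iota 1 m]) (Y i @^-1` ~` cball dist x r).
have mE : measurable E.
  apply: fin_bigcap_measurable => [|i _]; first exact: finite_seq.
  exact: measurable_preimage.
have PE : fine (P E) = (1 - fine (P (Y 0%N @^-1` cball dist x r))) ^+ m.
  rewrite (prob_all_in measurable_Y Y_ident Y_indep mC (iota_uniq 1 m)) size_iota.
  by rewrite (preimage_prob_setC P measurable_Y 0 mB).
apply: le_trans (integral_le_sum_indic (s := [:: tt]) (E := fun=> E)
  (c := 2 * supnorm eta) P _ _ _ _ _) _.
- by apply: measurableT_comp measurable_N; exact: measurable_local_error.
- by move=> w; exact: local_error_ge0.
- by [].
- by rewrite mulr_ge0 // (supnorm_ge0 x).
- move=> w; rewrite big_seq1; apply: local_error_le_indic => // N_out i /=.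
  rewrite mem_iota add1n ltnS => i_range.
  exact: (nearest_outside_cball (N_nearest w) N_out).
rewrite big_seq1 PE lee_fin ler_wpM2l ?mulr_ge0 ?(supnorm_ge0 x) //.
by apply/pow_le_expR/(preimage_prob_01 P measurable_Y).
Qed.

(* On the sphere, the nearest neighbor is some X_i on the sphere with all the
   other X_j outside the open ball; summing over i gives the factor m. *)
Lemma risk_sphere : (1 <= m)%N ->
  (\int[P]_w (local_error eta x (sphere dist x r) (N w))%:E
    <= (2 * supnorm eta * m%:R * fine (P (Y 0%N @^-1` sphere dist x r))
        * expR (- ((m%:R - 1) * fine (P (Y 0%N @^-1` oball dist x r)))))%:E)%E.
Proof.
move=> m_ge1.
have mS := measurable_sphere dist_metric measurable_borel x r.
have mB := measurable_oball dist_metric measurable_borel x r.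
have mC : measurable (~` oball dist x r) by exact: measurableC.
pose E i := \bigcap_(j in [set` iota 1 m])
  (Y j @^-1` (if j == i then sphere dist x r else ~` oball dist x r)).
have mE i : measurable (E i).
  apply: fin_bigcap_measurable => [|j _]; first exact: finite_seq.
  by apply: measurable_preimage; case: (j == i).
set q := fine (P (Y 0%N @^-1` sphere dist x r)).
set b := fine (P (Y 0%N @^-1` oball dist x r)).
have PE : {in iota 1 m, forall i, fine (P (E i)) = q * (1 - b) ^+ m.-1}.
  move=> i i_range; rewrite (prob_one_in_rest_in measurable_Y Y_ident Y_indep mS mC
    (iota_uniq 1 m) i_range) size_iota.
  by rewrite (preimage_prob_setC P measurable_Y 0 mB).
apply: le_trans (integral_le_sum_indic (s := iota 1 m) (E := E)
  (c := 2 * supnorm eta) P _ _ _ _ _) _.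
- by apply: measurableT_comp measurable_N; exact: measurable_local_error.
- by move=> w; exact: local_error_ge0.
- by [].
- by rewrite mulr_ge0 // (supnorm_ge0 x).
- move=> w; have [i i_range N_Yi] := N_select w.
  apply: le_trans (local_error_le_indic (E := E i) (w := w) x eta_bdd _) _.
    move=> N_S j /=; rewrite mem_iota add1n ltnS => j_range.
    case: eqP => [-> | _] /=; first by rewrite -N_Yi.
    exact: (nearest_on_sphere (N_nearest w) N_S).
  rewrite ler_wpM2l ?mulr_ge0 ?(supnorm_ge0 x) //.
  rewrite (bigD1_seq i) ?iota_uniq ?mem_iota ?add1n ?ltnS //= lerDl.
  by apply: sumr_ge0 => j _; rewrite indicE; case: (_ \in _).
rewrite (eq_big_seq _ PE) big_const_seq count_predT size_iota iter_addr_0 lee_fin.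
have := pow_le_expR m.-1 (preimage_prob_01 P measurable_Y 0 mB).
rewrite -subn1 natrB // -/b => pow_bound.
by rewrite -[_ *+ m]mulr_natl !mulrA ler_wpM2l // !mulr_ge0 ?(supnorm_ge0 x) // fine_ge0.
Qed.

End NearestNeighborRisk.

(* Y 0 is X, Y i (i >= 1) is X_i; NN m is the nearest neighbor X^x_m. *)
Theorem mainTheorem3 (R : realType) (dT dO : measure_display)
  (T : measurableType dT) (dist : T -> T -> R)
  (O : measurableType dO) (P : probability O R)
  (Y : nat -> O -> T) (x : T) (eta : T -> R) (NN : nat -> O -> T) :
  is_metric dist ->
  (@measurable _ T = <<s metric_open dist >>) ->
  (forall i, measurable_fun setT (Y i)) ->
  mutually_independent P Y ->
  identically_distributed P Y ->
  (forall r : R, 0 < r -> (0 < P (Y 0%N @^-1` cball dist x r))%E) ->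
  measurable_fun setT eta ->
  (exists M : R, forall y, `|eta y| <= M) ->
  (forall m : nat, (1 <= m)%N ->
     measurable_fun setT (NN m) /\
     forall w : O,
       (exists2 i : nat, (1 <= i <= m)%N & NN m w = Y i w) /\
       (forall i : nat, (1 <= i <= m)%N -> dist x (NN m w) <= dist x (Y i w))) ->
  forall (r : R) (m : nat), 0 < r -> (1 <= m)%N ->
  [/\ (\int[P]_w ((\1_(oball dist x r) (NN m w) * `|eta (NN m w) - eta x|)%:E)
        <= m%:R%:E * \int[P]_w ((\1_(oball dist x r) (Y 0%N w)
                                 * `|eta (Y 0%N w) - eta x|)%:E))%E,
      (\int[P]_w ((\1_(sphere dist x r) (NN m w) * `|eta (NN m w) - eta x|)%:E)
        <= (2 * supnorm eta * m%:R * fine (P (Y 0%N @^-1` sphere dist x r))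
            * expR (- ((m%:R - 1) * fine (P (Y 0%N @^-1` oball dist x r)))))%:E)%E
    & (\int[P]_w ((\1_(~` cball dist x r) (NN m w) * `|eta (NN m w) - eta x|)%:E)
        <= (2 * supnorm eta
            * expR (- (m%:R * fine (P (Y 0%N @^-1` cball dist x r)))))%:E)%E].
Proof.
move=> dist_metric measurable_borel measurable_Y Y_indep Y_ident _ measurable_eta
  eta_bdd NN_spec r m _ m_ge1.
have [measurable_NN NN_nn] := NN_spec m m_ge1.
have NN_select w : exists2 i : nat, (1 <= i <= m)%N & NN m w = Y i w.
  exact: (NN_nn w).1.
have NN_nearest w i : (1 <= i <= m)%N -> dist x (NN m w) <= dist x (Y i w).
  exact: (NN_nn w).2.
have oball_bound := risk_oball x r dist_metric measurable_borel measurable_Y Y_ident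
  measurable_eta measurable_NN NN_select.
have sphere_bound := risk_sphere r dist_metric measurable_borel measurable_Y Y_indep
  Y_ident measurable_eta eta_bdd measurable_NN NN_select NN_nearest m_ge1.
have outside_bound := risk_outside_cball r dist_metric measurable_borel measurable_Y
  Y_indep Y_ident measurable_eta eta_bdd measurable_NN NN_nearest.
rewrite /local_error in oball_bound sphere_bound outside_bound.
by split; [exact: oball_bound | exact: sphere_bound | exact: outside_bound].
Qed.
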